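(* Let $R$ be an integral domain with units $q,\lambda,x,q_0$ and elements $A,q_1$, $\delta=q-q^{-1}$, $x\delta=\delta-\lambda+\lambda^{-1}$, and let $\mathrm{BB}_2$ be as in the context. If $e_1\in\mathrm{BB}_2$ has vanishing annihilator ideal in $R$ (i.e. $re_1=0$ with $r\in R$ implies $r=0$), then $A(1-q_0\lambda)=q_1x$. If in addition $e_1$ and $Ye_1$ are $R$-linearly independent, then $q_0-q_0^{-1}=-\delta$.
   Context: $\mathrm{BB}_2=\mathrm{BB}_2(R)$ is the unital associative $R$-algebra generated by invertible $Y,X_1$ and an element $e_1$ subject to: $X_1e_1=e_1X_1=\lambda e_1$, $e_1^2=xe_1$, $X_1^{-1}=X_1-\delta+\delta e_1$, $X_1^2=1+\delta X_1-\delta\lambda e_1$, $X_1YX_1Y=YX_1YX_1$, $Y^2=q_1Y+q_0$, $YX_1Ye_1=e_1$, $e_1Ye_1=Ae_1$. (No relation between $A$, $q_0$ and the other parameters is assumed here.) *)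

From HB Require Import structures.
From mathcomp Require Import all_boot all_order all_algebra.
Set Implicit Arguments. Unset Strict Implicit. Unset Printing Implicit Defensive.
Import GRing.Theory.
Local Open Scope ring_scope.

Definition BB2_relations (R : comUnitRingType) (B : algType R)
    (q lam x q0 q1 A : R) (Y X1 e1 : B) : Prop :=
  let delta := q - q^-1 in
  (exists Yi : B, Y * Yi = 1 /\ Yi * Y = 1) /\
      X1 * (X1 - delta%:A + delta *: e1) = 1 /\ (X1 - delta%:A + delta *: e1) * X1 = 1 /\
      X1 * e1 = lam *: e1 /\ e1 * X1 = lam *: e1 /\
      e1 * e1 = x *: e1 /\
      X1 * X1 = 1 + delta *: X1 - (delta * lam) *: e1 /\
      X1 * Y * X1 * Y = Y * X1 * Y * X1 /\
      Y * Y = q1 *: Y + q0%:A /\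
      Y * X1 * Y * e1 = e1 /\
    e1 * Y * e1 = A *: e1.

From HB Require Import structures.
From mathcomp Require Import all_boot all_order all_algebra.
From mathcomp Require Import ring.
Set Implicit Arguments. Unset Strict Implicit.
Import GRing.Theory.
Local Open Scope ring_scope.

(* Put P = Y e1. The quadratic relation for Y, applied to X1 P, together with
   Y X1 P = e1 gives q0 X1 P = P - q1 e1. Multiplying this on the left by e1
   and using e1 X1 = lam e1, e1 Y e1 = A e1, e1^2 = x e1 leaves a scalar
   multiple of e1 that vanishes: the first claim. Multiplying it on the left by
   X1^-1 = X1 - delta + delta e1 instead and eliminating X1 P once more shows
   that (q0^2 - 1 + q0 delta) P is a multiple of e1; independence kills that
   coefficient, and dividing by q0 gives the second claim. *)

Section BB2Relations.

Variables (R : comNzRingType) (B : algType R).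
Variables (d lam x q0 q1 A : R) (Y X1 e1 : B).

Local Notation X1inv := (X1 - d%:A + d *: e1).

Hypothesis X1invX1 : X1inv * X1 = 1.
Hypothesis X1e1 : X1 * e1 = lam *: e1.
Hypothesis e1X1 : e1 * X1 = lam *: e1.
Hypothesis e1e1 : e1 * e1 = x *: e1.
Hypothesis YY : Y * Y = q1 *: Y + q0%:A.
Hypothesis YX1Ye1 : Y * X1 * Y * e1 = e1.
Hypothesis e1Ye1 : e1 * Y * e1 = A *: e1.

Lemma scale_q0_X1Ye1 : q0 *: (X1 * (Y * e1)) = Y * e1 - q1 *: e1.
Proof.
have YX1Ye1' : Y * (X1 * (Y * e1)) = e1 by rewrite !mulrA.
have := congr1 (fun z => z * (X1 * (Y * e1))) YY.
rewrite /= mulrDl -scalerAl mulr_algl -mulrA !YX1Ye1' => E.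
by rewrite [in RHS]E addrAC subrr add0r.
Qed.

Lemma e1_annihilated : (A * (1 - q0 * lam) - q1 * x) *: e1 = 0.
Proof.
have := congr1 (fun z => e1 * z) scale_q0_X1Ye1.
rewrite /= -scalerAr mulrBr -scalerAr !mulrA e1X1 -!scalerAl e1Ye1 e1e1.
rewrite !scalerA mulrC => E.
by rewrite mulrBr mulr1 !scalerBl addrAC -E subrr.
Qed.

Lemma scale_q0_sq_Ye1 :
  (q0 * q0) *: (Y * e1) =
  (1 - q0 * d) *: (Y * e1) + (- q1 + q0 * (d * A) - q0 * (q1 * (lam - d + d * x))) *: e1.
Proof.
set P := Y * e1.
have q0P : q0 *: P = X1inv * (P - q1 *: e1).
  by rewrite -scale_q0_X1Ye1 -scalerAr [X1inv * _]mulrA X1invX1 mul1r.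
have X1invP : X1inv * P = X1 * P - d *: P + (d * A) *: e1.
  by rewrite !mulrDl mulNr mulr_algl -!scalerAl /P [e1 * _]mulrA e1Ye1 scalerA.
have X1inve1 : X1inv * e1 = (lam - d + d * x) *: e1.
  by rewrite !mulrDl mulNr mulr_algl -scalerAl e1e1 X1e1 scalerA -scalerBl -scalerDl.
rewrite -scalerA q0P mulrBr X1invP -scalerAr X1inve1 scalerA.
rewrite scalerBr scalerDr scalerBr scale_q0_X1Ye1 !scalerA.
rewrite scalerBl scale1r !scalerBl scalerDl scaleNr.
by rewrite -/P [P - _ - _]addrAC !addrA.
Qed.

Lemma Ye1_e1_dependence :
  exists c, c *: e1 + (q0 * q0 - 1 + q0 * d) *: (Y * e1) = 0.
Proof.
have -> : q0 * q0 - 1 + q0 * d = q0 * q0 - (1 - q0 * d) by ring.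
eexists; rewrite scalerBl scale_q0_sq_Ye1 addrAC subrr add0r.
by rewrite -scalerDl -(scale0r e1); congr (_ *: _); apply: addNr.
Qed.

End BB2Relations.

Lemma subrV_eq_opp (R : unitRingType) (u d : R) :
  u \is a GRing.unit -> u * u - 1 + u * d = 0 -> u - u^-1 = - d.
Proof.
move=> Uu /(congr1 (GRing.mul u^-1)).
rewrite mulr0 !mulrDr mulrN mulr1 !mulrA mulVr // !mul1r => /eqP.
by rewrite addr_eq0 => /eqP.
Qed.

Theorem lemma3 (R : idomainType) (q lam x q0 A q1 : R)
  (hq : q \is a GRing.unit) (hlam : lam \is a GRing.unit)
  (hx : x \is a GRing.unit) (hq0 : q0 \is a GRing.unit)
  (hxd : x * (q - q^-1) = (q - q^-1) - lam + lam^-1)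
  (B : algType R) (Y X1 e1 : B)
  (hrel : BB2_relations q lam x q0 q1 A Y X1 e1) :
  (forall r : R, r *: e1 = 0 -> r = 0) ->
  A * (1 - q0 * lam) = q1 * x /\
  ((forall a b : R, a *: e1 + b *: (Y * e1) = 0 -> a = 0 /\ b = 0) ->
   q0 - q0^-1 = - (q - q^-1)).
Proof.
case: hrel => _ [_ [X1invX1 [X1e1 [e1X1 [e1e1 [_ [_ [YY [YX1Ye1 e1Ye1]]]]]]]]].
move=> e1_torsionfree; split.
  apply/eqP; rewrite -subr_eq0; apply/eqP/e1_torsionfree.
  exact: e1_annihilated e1X1 e1e1 YY YX1Ye1 e1Ye1.
move=> e1_Ye1_free; apply: subrV_eq_opp hq0 _.
have [c /e1_Ye1_free [_ //]] := Ye1_e1_dependence X1invX1 X1e1 e1e1 YY YX1Ye1 e1Ye1.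
Qed.
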